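(* Let $X$ be a $T_1$ topological space. Then $T''(X)$ is a (Von Neumann) regular ring if and only if for each $Z\in Z''[X]$ there exists a dense cozero set $U$ in $X$ such that $Z\cap U$ is clopen in the subspace $U$.
   Context: $C(X)$ is the ring of real-valued continuous functions on $X$; a cozero set is a set $\{x: h(x)\neq 0\}$ with $h\in C(X)$. $T''(X)$ is the ring (under pointwise operations) of all functions $f\colon X\to\mathbb{R}$ for which there is a dense cozero set $U$ of $X$ with $f|_U$ continuous. For $f\colon X\to \mathbb{R}$, $Z(f)=\{x: f(x)=0\}$, and $Z''[X]=\{Z(f): f\in T''(X)\}$. A commutative ring $R$ is regular if for each $a\in R$ there is $x\in R$ with $a=a^2x$. *)

From HB Require Import structures.
From mathcomp Require Import all_boot all_order all_algebra.
From mathcomp Require Import all_classical all_reals all_analysis.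
Set Implicit Arguments. Unset Strict Implicit. Unset Printing Implicit Defensive.
Import Order.TTheory GRing.Theory Num.Theory.
Import numFieldNormedType.Exports.
Local Open Scope classical_set_scope.
Local Open Scope ring_scope.

Definition cozero_set (R : realType) (X : topologicalType) (U : set X) : Prop :=
  exists h : X -> R, continuous h /\ U = [set x | h x != 0].

Definition Tpp (R : realType) (X : topologicalType) (f : X -> R) : Prop :=
  exists U : set X, cozero_set R U /\ dense U /\ {within U, continuous f}.

Definition Tpp_regular (R : realType) (X : topologicalType) : Prop :=
  forall a : X -> R, Tpp a ->
    exists b : X -> R, Tpp b /\ a = (fun x => a x * a x * b x).

Definition zero_set (R : realType) (X : Type) (f : X -> R) : set X :=
  [set x | f x = 0].

Definition Zpp (R : realType) (X : topologicalType) (Z : set X) : Prop :=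
  exists f : X -> R, Tpp f /\ Z = zero_set f.

Definition clopen_in (X : topologicalType) (U A : set X) : Prop :=
  A `<=` U /\
  (exists O : set X, open O /\ A = O `&` U) /\
  (exists C : set X, closed C /\ A = C `&` U).

From HB Require Import structures.
From mathcomp Require Import all_boot all_order all_algebra.
From mathcomp Require Import all_classical all_reals all_analysis.
Local Open Scope classical_set_scope.
Local Open Scope ring_scope.
Import Order.TTheory GRing.Theory Num.Theory.
Import numFieldNormedType.Exports.
Set Implicit Arguments. Unset Strict Implicit.

(* If f = f^2 g, then f g is 1 off Z(f) and 0 on Z(f); being continuous on a
   dense cozero set U, it exhibits Z(f) ∩ U as both open and closed in U.
   Conversely, the pointwise inverse 1/f (with 1/0 = 0) satisfies f = f^2 (1/f);
   on a dense cozero set U on which f is continuous and Z(f) ∩ U is open in U,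
   1/f is continuous at points of U off Z(f) because f is, and at points of
   Z(f) ∩ U because it vanishes on a neighbourhood of them. *)

Lemma cozero_set_open (R : realType) (X : topologicalType) (U : set X) :
  cozero_set R U -> open U.
Proof.
move=> [h [ch ->]].
have -> : [set x | h x != 0] = h @^-1` [set y : R | y != 0] by [].
by apply: open_comp; [move=> x _; apply: ch | exact: open_neq].
Qed.

Lemma cozero_setI (R : realType) (X : topologicalType) (U V : set X) :
  cozero_set R U -> cozero_set R V -> cozero_set R (U `&` V).
Proof.
move=> [h [ch ->]] [k [ck ->]]; exists (h \* k); split.
  by move=> x; exact: continuousM (ch x) (ck x).
by apply/seteqP; split=> x /=; rewrite mulf_eq0 negb_or => /andP.
Qed.

Lemma Tpp_continuous_in (R : realType) (X : topologicalType) (f : X -> R) :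
  Tpp f -> exists U, [/\ cozero_set R U, dense U & {in U, continuous f}].
Proof.
move=> [U [cU [dU cf]]]; exists U; split => //.
by rewrite -continuous_open_subspace //; exact: cozero_set_open cU.
Qed.

Lemma Tpp_continuous_inI (R : realType) (X : topologicalType) (f g : X -> R) :
  Tpp f -> Tpp g ->
  exists U, [/\ cozero_set R U, dense U, {in U, continuous f}
              & {in U, continuous g}].
Proof.
move=> /Tpp_continuous_in[U [cU dU cf]] /Tpp_continuous_in[V [cV dV cg]].
exists (U `&` V); split;
  [exact: cozero_setI | exact: denseI (cozero_set_open cU) dU dV | |];
  move=> x /set_mem[Ux Vx]; [exact: cf (mem_set Ux) | exact: cg (mem_set Vx)].
Qed.

Lemma open_preimage_in (R : realType) (X : topologicalType) (U : set X)
    (g : X -> R) (A : set R) :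
  open U -> {in U, continuous g} -> open A -> open (U `&` g @^-1` A).
Proof. by move=> oU cg; apply: (continuous_inP _ oU).1. Qed.

Lemma regular_mul_inv (F : fieldType) (a b : F) :
  a = a * a * b -> a != 0 -> a * b = 1.
Proof. by move=> aE a0; apply: (mulfI a0); rewrite mulr1 mulrA -aE. Qed.

Lemma regular_clopen_zero_set (R : realType) (X : topologicalType)
    (U : set X) (f b : X -> R) :
  open U -> {in U, continuous (f \* b)} -> f = (fun x => f x * f x * b x) ->
  clopen_in U (zero_set f `&` U).
Proof.
move=> oU cfb fE.
have fb1 x : f x != 0 -> f x * b x = 1.
  by apply: regular_mul_inv; exact: (congr1 (fun g => g x) fE).
have fb0 x : f x = 0 -> f x * b x = 0 by move->; rewrite mul0r.
split; first by move=> x [].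
split.
- exists (U `&` (f \* b) @^-1` [set y | y != 1]).
  split; first exact/open_preimage_in/open_neq.
  apply/seteqP; split=> x /=; rewrite /zero_set /=.
    by move=> [fx0 Ux]; rewrite fb0 // eq_sym oner_eq0.
  move=> [[Ux /= fbx] _]; split => //.
  by apply: contraNeq fbx => /fb1->.
- exists (~` (U `&` (f \* b) @^-1` [set y | y != 0])).
  split; first exact/open_closedC/open_preimage_in/open_neq.
  apply/seteqP; split=> x /=; rewrite /zero_set /=.
    by move=> [fx0 Ux]; split => // -[_]; rewrite fb0 ?eqxx.
  move=> [nx Ux]; split => //; have [//|/fb1 fbx] := eqVneq (f x) 0.
  by case: nx; split => //=; rewrite fbx oner_eq0.
Qed.

Lemma continuous_in_inv (R : realType) (X : topologicalType)
    (U W : set X) (f : X -> R) :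
  open U -> {in U, continuous f} -> open W -> zero_set f `&` U = W `&` U ->
  {in U, continuous (fun x => (f x)^-1)}.
Proof.
move=> oU cf oW ZE x Ux.
have [fx0|fx0] := eqVneq (f x) 0; last exact: continuousV (cf x Ux).
have ZU : nbhs x (zero_set f `&` U).
  rewrite ZE; apply: open_nbhs_nbhs; split; first exact: openI.
  by rewrite -ZE; split => //; exact: set_mem.
rewrite /continuous_at fx0 invr0; apply: cvg_near_cst.
by apply: filterS ZU => y [/= fy0 _]; rewrite fy0 invr0.
Qed.

Lemma Tpp_inv (R : realType) (X : topologicalType) (U W : set X) (f : X -> R) :
  cozero_set R U -> dense U -> open W -> zero_set f `&` U = W `&` U ->
  Tpp f -> Tpp (fun x => (f x)^-1).
Proof.
move=> cU dU oW ZE /Tpp_continuous_in[V [cV dV cf]].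
have [oU oV] := (cozero_set_open cU, cozero_set_open cV).
exists (U `&` V); split; first exact: cozero_setI.
split; first exact: denseI oU dU dV.
rewrite continuous_open_subspace; last exact: openI.
apply: (continuous_in_inv (openI oU oV) _ oW).
  by move=> x /set_mem[_ Vx]; exact: cf (mem_set Vx).
by rewrite setIA ZE setIA.
Qed.

Lemma mulf_regular_inv (T : Type) (F : fieldType) (f : T -> F) :
  f = (fun x => f x * f x * (f x)^-1).
Proof.
apply: funext => x; have [->|fx0] := eqVneq (f x) 0; first by rewrite !mul0r.
by rewrite mulfK.
Qed.

Theorem theorem3p1 (R : realType) (X : topologicalType) :
  accessible_space X ->
  (Tpp_regular R X <->
   (forall Z : set X, Zpp R Z ->
      exists U : set X, cozero_set R U /\ dense U /\ clopen_in U (Z `&` U))).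
Proof.
move=> _; split.
- move=> reg Z [f [Tf ->]].
  have [b [Tb fE]] := reg f Tf.
  have [U [cU dU cf cb]] := Tpp_continuous_inI Tf Tb.
  exists U; do 2 split => //.
  apply: regular_clopen_zero_set fE; first exact: cozero_set_open cU.
  by move=> x Ux; exact: continuousM (cf x Ux) (cb x Ux).
- move=> clopenZ f Tf.
  have [U [cU [dU [_ [[W [oW ZE]] _]]]]] :=
    clopenZ _ (ex_intro _ f (conj Tf erefl)).
  exists (fun x => (f x)^-1); split; last exact: mulf_regular_inv.
  exact: Tpp_inv cU dU oW ZE Tf.
Qed.
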